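(* Let $0<\lambda\leq\Lambda$ and let $F:\mathcal{S}(d)\to\mathbb{R}$ satisfy \[ \lambda\|N\|\leq F(M+N)-F(M)\leq \Lambda\|N\|\quad\text{for all } M,N\in\mathcal{S}(d),\ N\geq 0, \] and $F(0)=0$. Suppose the recession profile $F^*(M):=\lim_{\mu\to 0}\mu F(\mu^{-1}M)$ is convex. For $\varepsilon>0$ let $F_\varepsilon(M):=\int_{\mathbb{R}^{d^*}}F(M-Q)\eta_\varepsilon(Q)\,dQ$. Then for every $\varepsilon>0$ the recession profile $(F_\varepsilon)^*(M):=\lim_{\mu\to 0}\mu F_\varepsilon(\mu^{-1}M)$ is convex.
   Context: $\mathcal{S}(d)$ is the space of real symmetric $d\times d$ matrices, identified with $\mathbb{R}^{d^*}$, $d^*:=d(d+1)/2$; $\|\cdot\|$ is a matrix norm; $N\geq 0$ means positive semidefinite. $(\eta_\varepsilon)_{\varepsilon>0}\subset\mathcal{C}^\infty(\mathbb{R}^{d^*})$ is a family of standard mollifiers. The recession profile of an operator $G$ is $G^*(M)=\lim_{\mu\to0}\mu G(\mu^{-1}M)$. *)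

From HB Require Import structures.
From mathcomp Require Import all_boot all_order all_algebra.
From mathcomp Require Import all_classical all_reals all_analysis.
Set Implicit Arguments. Unset Strict Implicit. Unset Printing Implicit Defensive.
Import Order.TTheory GRing.Theory Num.Theory.
Import numFieldNormedType.Exports.
Local Open Scope ring_scope.
Local Open Scope classical_set_scope.

Section Defs.
Variables (R : realType) (d : nat).

Definition sym_mx (A : 'M[R]_d) : Prop := A^T = A.

Definition psd (N : 'M[R]_d) : Prop :=
  sym_mx N /\ forall v : 'cV[R]_d, 0 <= (v^T *m N *m v) 0 0.

Definition is_matrix_norm (nrm : 'M[R]_d -> R) : Prop :=
  [/\ forall A, 0 <= nrm A,
      forall A, nrm A = 0 -> A = 0,
      forall (a : R) A, nrm (a *: A) = `|a| * nrm A
    & forall A B, nrm (A + B) <= nrm A + nrm B].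

Definition convex_on_sym (G : 'M[R]_d -> R) : Prop :=
  forall A B (t : R), sym_mx A -> sym_mx B -> 0 <= t <= 1 ->
    G (t *: A + (1 - t) *: B) <= t * G A + (1 - t) * G B.

Definition recession_limit (G : 'M[R]_d -> R) (M : 'M[R]_d) (L : R) : Prop :=
  (mu * G (mu^-1 *: M)) @[mu --> (0:R)^'+] --> L.

Definition recession_profile_convex (G : 'M[R]_d -> R) : Prop :=
  exists Gs : 'M[R]_d -> R,
    (forall M, sym_mx M -> recession_limit G M (Gs M)) /\ convex_on_sym Gs.

(* Identification S(d) = R^{d*}: coordinates are the upper-triangular
   entries (i,j), i <= j; there are d(d+1)/2 of them. *)
Definition coords : seq ('I_d * 'I_d) :=
  seq.filter (fun p : 'I_d * 'I_d => (nat_of_ord p.1 <= nat_of_ord p.2)%N) (enum [set: ('I_d * 'I_d)%type]).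

Definition sym_of (c : 'I_d * 'I_d -> R) : 'M[R]_d :=
  \matrix_(i, j) (if (i <= j)%N then c (i, j) else c (j, i)).

Definition enorm (c : 'I_d * 'I_d -> R) : R :=
  Num.sqrt (\sum_(p <- coords) c p ^+ 2).

Definition upd (c : 'I_d * 'I_d -> R) (p : 'I_d * 'I_d) (x : R) :=
  fun q => if q == p then x else c q.

Fixpoint iint (s : seq ('I_d * 'I_d)) (f : ('I_d * 'I_d -> R) -> R)
    (c : 'I_d * 'I_d -> R) : R :=
  match s with
  | [::] => f c
  | p :: s' => (\int[@lebesgue_measure R]_(x in setT) iint s' f (upd c p x))%R
  end.

Definition integral_Rdstar (f : ('I_d * 'I_d -> R) -> R) : R :=
  iint coords f (fun _ => 0).

Definition phi_std (c : 'I_d * 'I_d -> R) : R :=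
  if enorm c < 1 then expR ((enorm c ^+ 2 - 1)^-1) else 0.

Definition eta_std (c : 'I_d * 'I_d -> R) : R :=
  phi_std c / integral_Rdstar phi_std.

Definition eta (eps : R) (c : 'I_d * 'I_d -> R) : R :=
  (eps ^+ size coords)^-1 * eta_std (fun p => c p / eps).

Definition mollify (F : 'M[R]_d -> R) (eps : R) (M : 'M[R]_d) : R :=
  integral_Rdstar (fun c => F (M - sym_of c) * eta eps c).

End Defs.

(* On the support of eta_eps every Q = sym_of c has entries of
   size at most eps, so by diagonal dominance both P + Q and P - Q are positive
   semidefinite for P = (eps d) I.  Ellipticity then gives
   |F (X - Q) - F X| <= Lam |P| uniformly in Q, hence
   m (F X - C) <= F_eps X <= m (F X + C) with m the total mass of eta_eps and
   C = Lam |P|.  Rescaling, mu F_eps (M / mu) = m mu F (M / mu) + O(mu), so the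
   recession profile of F_eps is m F^*, a nonnegative multiple of a convex
   function (the value of m is irrelevant).
   F is not assumed measurable, so integrals are only compared through
   monotonicity and positive homogeneity of the Lebesgue integral, which hold
   for arbitrary functions since the integral of a nonnegative function is a
   supremum over the simple functions below it. *)

From Pilot Require Import Defs.
From HB Require Import structures.
From mathcomp Require Import all_boot all_order all_algebra.
From mathcomp Require Import all_classical all_reals all_analysis.
From mathcomp Require Import ring.
Import Order.TTheory GRing.Theory Num.Theory.
Import numFieldNormedType.Exports.
Set Implicit Arguments.
Unset Strict Implicit.
Unset Printing Implicit Defensive.
Local Open Scope ring_scope.

Section integral_without_measurability.
Import HBNNSimple.
Local Open Scope ereal_scope.
Variables (d : measure_display) (T : measurableType d) (R : realType).
Variable mu : {measure set T -> \bar R}.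

Lemma ge0_le_integralT (f g : T -> \bar R) : (forall x, 0 <= f x) ->
  (forall x, f x <= g x) -> \int[mu]_x f x <= \int[mu]_x g x.
Proof.
move=> f0 fg; have g0 x : 0 <= g x := le_trans (f0 x) (fg x).
rewrite (ge0_integralTE mu f0) (ge0_integralTE mu g0) /=.
apply: ereal_sup_le => _ [h hf <-]; exists h => //= x.
exact: le_trans (hf x) (fg x).
Qed.

Lemma le_integralT (f g : T -> \bar R) :
  (forall x, f x <= g x) -> \int[mu]_x f x <= \int[mu]_x g x.
Proof.
move=> fg; have fgT : {in setT, forall x, f x <= g x} by move=> x _.
rewrite integralE [leRHS]integralE; apply: leeB; apply: ge0_le_integralT.
- exact: funepos_ge0.
- by move=> x; exact: funepos_le fgT _ (in_setT x).
- exact: funeneg_ge0.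
- by move=> x; exact: funeneg_le fgT _ (in_setT x).
Qed.

Let ge0_integralZlT_le (k : R) (f : T -> \bar R) : (0 < k)%R ->
  (forall x, 0 <= f x) ->
  \int[mu]_x (k%:E * f x) <= k%:E * \int[mu]_x f x.
Proof.
move=> k0 f0.
have kf0 x : 0 <= k%:E * f x by apply: mule_ge0; rewrite // lee_fin ltW.
have k_neq0 : k != 0%R by rewrite gt_eqF.
rewrite (ge0_integralTE mu kf0) /=; apply: ge_ereal_sup => _ [h hf <-].
have ki0 : (0 <= k^-1)%R by rewrite invr_ge0 ltW.
pose h' := scale_nnsfun h ki0.
have h'f : sintegral mu h' <= \int[mu]_x f x.
  rewrite (ge0_integralTE mu f0); apply: ereal_sup_ubound; exists h' => //= x.
  rewrite EFinM -[f x](mul1e) -(mulVf k_neq0) EFinM -muleA.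
  by apply: lee_wpmul2l; rewrite ?lee_fin.
have -> : sintegral mu h = k%:E * sintegral mu h'.
  by rewrite sintegralrM muleA -EFinM divff // mul1e.
by apply: lee_wpmul2l; rewrite // lee_fin ltW.
Qed.

Lemma ge0_integralZlT (k : R) (f : T -> \bar R) : (0 <= k)%R ->
  (forall x, 0 <= f x) ->
  \int[mu]_x (k%:E * f x) = k%:E * \int[mu]_x f x.
Proof.
move=> k0 f0; have [->|k_neq0] := eqVneq k 0%R.
  by rewrite mul0e (eq_integral (fun=> 0)) ?integral0 // => x _; rewrite mul0e.
have k_gt0 : (0 < k)%R by rewrite lt_def k_neq0.
apply/le_anti; rewrite ge0_integralZlT_le //=.
have kf0 x : 0 <= k%:E * f x by apply: mule_ge0; rewrite // lee_fin.
have ki_gt0 : (0 < k^-1)%R by rewrite invr_gt0.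
have := @ge0_integralZlT_le _ _ ki_gt0 kf0.
under eq_integral do rewrite muleA -EFinM mulVf // mul1e.
move=> le_f; rewrite -[leRHS]mul1e -[1]/(1%R%:E) -(divff k_neq0) EFinM -muleA.
by apply: lee_wpmul2l; rewrite ?lee_fin.
Qed.

Lemma integralZlT_ge0 (k : R) (u : T -> R) : (forall x, 0 <= u x)%R ->
  \int[mu]_x (k * u x)%:E = k%:E * \int[mu]_x (u x)%:E.
Proof.
move=> u0.
have [k0|k0] := leP 0%R k.
  by under eq_integral do rewrite EFinM; rewrite ge0_integralZlT.
have Nk0 : (0 <= - k)%R by rewrite oppr_ge0 ltW.
rewrite (eq_integral (fun x => - ((- k)%:E * (u x)%:E))); last first.
  by move=> x _; rewrite EFinN mulNe oppeK -EFinM.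
rewrite integral_ge0N => [|x _]; last by apply: mule_ge0; rewrite ?lee_fin.
by rewrite ge0_integralZlT // EFinN mulNe oppeK.
Qed.

End integral_without_measurability.

Section Rintegral_comparison.
Variables (d : measure_display) (T : measurableType d) (R : realType).
Variable mu : {measure set T -> \bar R}.

Lemma Rintegral_sandwich (u v : T -> R) (a b : R) : (forall x, 0 <= u x) ->
  (\int[mu]_x (u x)%:E)%E \is a fin_num ->
  (forall x, a * u x <= v x <= b * u x) ->
  a * (\int[mu]_x u x) <= \int[mu]_x v x <= b * \int[mu]_x u x.
Proof.
move=> u0 u_fin uv; rewrite /Rintegral.
have lo : (\int[mu]_x (a * u x)%:E <= \int[mu]_x (v x)%:E)%E.
  by apply: le_integralT => x; rewrite lee_fin; case/andP: (uv x).
have hi : (\int[mu]_x (v x)%:E <= \int[mu]_x (b * u x)%:E)%E.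
  by apply: le_integralT => x; rewrite lee_fin; case/andP: (uv x).
move: lo hi; rewrite !integralZlT_ge0 // -(fineK u_fin) -!EFinM.
by case: (\int[mu]_x (v x)%:E)%E => [r||] //=; rewrite !lee_fin => -> ->.
Qed.

End Rintegral_comparison.

Section box_supported_integral.
Variable R : realType.
Local Notation lebesgue := (@lebesgue_measure R).
Local Open Scope classical_set_scope.

Lemma integral_le_box (u : R -> R) (K r : R) : 0 < r ->
  (forall x, 0 <= u x <= K) -> (forall x, r <= `|x| -> u x = 0) ->
  (\int[lebesgue]_x (u x)%:E <= (K * (r + r))%:E)%E.
Proof.
move=> r0 uK u_supp; have K0 : 0 <= K by case/andP: (uK 0) => /le_trans; apply.
pose I : set R := [set` `]-r, r[%R].
apply: (@le_trans _ _ (\int[lebesgue]_x (K * \1_I x)%:E)%E).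
  apply: le_integralT => x; rewrite lee_fin indicE.
  have [xI|xI] := boolP (x \in I); first by rewrite mulr1; case/andP: (uK x).
  rewrite mulr0 u_supp ?lexx // leNgt; apply: contra xI => xr.
  by rewrite inE /I /= in_itv /= -ltr_norml.
rewrite integralZlT_ge0 // integral_indic ?setIT //; last exact: measurable_itv.
rewrite EFinM; apply: lee_wpmul2l; first by rewrite lee_fin.
have := lebesgue_measure_itv `]-r, r[%R; rewrite /= lte_fin gtrN // => ->.
by rewrite opprK -EFinD.
Qed.

End box_supported_integral.

Section iterated_integral.
Variables (R : realType) (d : nat).
Local Notation vec := ('I_d * 'I_d -> R).

Lemma upd_eq (c : vec) p x : upd c p x p = x.
Proof. by rewrite /upd eqxx. Qed.

Lemma upd_neq (c : vec) p x q : q != p -> upd c p x q = c q.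
Proof. by rewrite /upd => /negbTE ->. Qed.

Lemma iint_ge0 s (f : vec -> R) c : (forall c, 0 <= f c) -> 0 <= iint s f c.
Proof.
move=> f0; elim: s c => [|p s IH] c /=; first exact: f0.
by apply: fine_ge0; apply: integral_ge0 => x _; rewrite lee_fin IH.
Qed.

Lemma iint_eq0 (P : R -> Prop) s (f : vec -> R) q : q \notin s ->
  (forall c, P (c q) -> f c = 0) -> forall c, P (c q) -> iint s f c = 0.
Proof.
move=> + f0; elim: s => [_|p s IH]; first exact: f0.
rewrite inE negb_or => /andP[qp qs] c Pcq /=.
rewrite /Rintegral (eq_integral (fun=> 0%E)) ?integral0 // => x _.
by rewrite IH // upd_neq.
Qed.

Section box_supported.
Variables (A : seq ('I_d * 'I_d)) (K r : R) (w : vec -> R).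
Hypotheses (r_gt0 : 0 < r) (w_ge0 : forall c, 0 <= w c)
  (w_le : forall c, w c <= K)
  (w_eq0 : forall c q, q \in A -> r <= `|c q| -> w c = 0).

Let integral_iint_box {p s} {B : R} : uniq (p :: s) -> {subset p :: s <= A} ->
  (forall c, iint s w c <= B) -> forall c,
  let I := (\int[lebesgue_measure]_x (iint s w (upd c p x))%:E)%E in
  I \is a fin_num /\ fine I <= B * (r + r).
Proof.
move=> /andP[ps _] sA iint_le c I.
have I_le : (I <= (B * (r + r))%:E)%E.
  apply: integral_le_box => // [x|x xr]; first by rewrite iint_ge0 ?iint_le.
  apply: (@iint_eq0 (fun y => r <= `|y|) s w p) => //; last by rewrite upd_eq.
  by move=> c'; apply: w_eq0; apply: sA; rewrite mem_head.
have I_fin : I \is a fin_num.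
  rewrite ge0_fin_numE ?(le_lt_trans I_le) ?ltry //.
  by apply: integral_ge0 => x _; rewrite lee_fin iint_ge0.
by split; rewrite // -lee_fin fineK.
Qed.

Lemma iint_le_box s : uniq s -> {subset s <= A} ->
  forall c, iint s w c <= K * (r + r) ^+ size s.
Proof.
elim: s => [_ _ c|p s IH ps sA c]; first by rewrite mulr1.
have [_ s_uniq] := andP ps.
have s_sub : {subset s <= A} by move=> q qs; apply: sA; rewrite inE qs orbT.
have [_] := integral_iint_box ps sA (IH s_uniq s_sub) c.
by rewrite exprS mulrCA mulrC.
Qed.

Lemma iint_sandwich (h : vec -> R) (a b : R) :
  (forall c, a * w c <= h c <= b * w c) -> forall s, uniq s -> {subset s <= A} ->
  forall c, a * iint s w c <= iint s h c <= b * iint s w c.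
Proof.
move=> hw; elim=> [_ _ c|p s IH ps sA c] /=; first exact: hw.
have [_ s_uniq] := andP ps.
have s_sub : {subset s <= A} by move=> q qs; apply: sA; rewrite inE qs orbT.
have [I_fin _] := integral_iint_box ps sA (@iint_le_box s s_uniq s_sub) c.
apply: Rintegral_sandwich => // x; first exact: iint_ge0.
exact: IH.
Qed.

End box_supported.
End iterated_integral.

Section mollifier.
Variables (R : realType) (d : nat).
Local Notation vec := ('I_d * 'I_d -> R).

Lemma coords_uniq : uniq (coords d).
Proof. by rewrite /coords filter_uniq // enum_uniq. Qed.

Lemma phi_std_ge0 (c : vec) : 0 <= phi_std c.
Proof. by rewrite /phi_std; case: ifP => // _; rewrite expR_ge0. Qed.

Lemma phi_std_le1 (c : vec) : phi_std c <= 1.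
Proof.
rewrite /phi_std; case: ifP => [c_lt1|_]; last exact: ler01.
rewrite expR_le1 invr_le0 subr_le0 -[1](expr1n _ 2) ler_pXn2r ?nnegrE //.
  exact: ltW.
by rewrite /enorm sqrtr_ge0.
Qed.

Lemma phi_std_eq0 (c : vec) q : q \in coords d -> 1 <= `|c q| -> phi_std c = 0.
Proof.
move=> qA cq_ge1; rewrite /phi_std ifN // -leNgt /enorm -sqrtr1 ler_sqrt.
  rewrite (big_rem q) //= -[1]addr0 lerD //.
    by rewrite -real_normK ?num_real // -[1](expr1n _ 2) ler_pXn2r ?nnegrE.
  by rewrite sumr_ge0 // => *; exact: sqr_ge0.
by rewrite sumr_ge0 // => *; exact: sqr_ge0.
Qed.

Variable eps : R.
Hypothesis eps_gt0 : 0 < eps.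
Local Notation eta_eps := (@Defs.eta R d eps).

Lemma eta_ge0 (c : vec) : 0 <= eta_eps c.
Proof.
rewrite /Defs.eta /eta_std !mulr_ge0 ?phi_std_ge0 // invr_ge0.
  by rewrite exprn_ge0 // ltW.
by apply: iint_ge0; exact: phi_std_ge0.
Qed.

Lemma eta_le (c : vec) :
  eta_eps c <= (eps ^+ size (coords d))^-1 * (integral_Rdstar (@phi_std R d))^-1.
Proof.
apply: ler_wpM2l; first by rewrite invr_ge0 exprn_ge0 // ltW.
rewrite ler_piMl ?phi_std_le1 // invr_ge0.
by apply: iint_ge0; exact: phi_std_ge0.
Qed.

Lemma eta_eq0 (c : vec) q : q \in coords d -> eps <= `|c q| -> eta_eps c = 0.
Proof.
move=> qA cq; rewrite /Defs.eta /eta_std (@phi_std_eq0 _ q) ?mul0r ?mulr0 //.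
by rewrite normrM normfV (gtr0_norm eps_gt0) ler_pdivlMr // mul1r.
Qed.

Lemma integral_Rdstar_eta_ge0 : 0 <= integral_Rdstar eta_eps.
Proof. by apply: iint_ge0; exact: eta_ge0. Qed.

Lemma integral_Rdstar_sandwich (h : vec -> R) (a b : R) :
  (forall c, a * eta_eps c <= h c <= b * eta_eps c) ->
  a * integral_Rdstar eta_eps <= integral_Rdstar h <=
  b * integral_Rdstar eta_eps.
Proof.
move=> hw; rewrite /integral_Rdstar.
exact: (iint_sandwich eps_gt0 eta_ge0 eta_le eta_eq0 hw coords_uniq).
Qed.

End mollifier.

Lemma bilinear_term_ge (R : realFieldType) (e q x y : R) : `|q| <= e ->
  - (e / 2) * (x ^+ 2 + y ^+ 2) <= x * q * y.
Proof.
rewrite ler_norml => /andP[eq qe]; rewrite -subr_ge0.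
have -> : x * q * y - - (e / 2) * (x ^+ 2 + y ^+ 2) =
    ((e - q) * (x - y) ^+ 2 + (q + e) * (x + y) ^+ 2) / 4 by field.
rewrite divr_ge0 // addr_ge0 // mulr_ge0 ?sqr_ge0 //.
  by rewrite subr_ge0.
by rewrite -lerBlDr sub0r.
Qed.

Section symmetric_matrices.
Variables (R : realType) (d : nat).

Lemma sym_mxD (A B : 'M[R]_d) : sym_mx A -> sym_mx B -> sym_mx (A + B).
Proof. by rewrite /sym_mx => hA hB; rewrite linearD /= hA hB. Qed.

Lemma sym_mxN (A : 'M[R]_d) : sym_mx A -> sym_mx (- A).
Proof. by rewrite /sym_mx => hA; rewrite linearN /= hA. Qed.

Lemma sym_mxZ (k : R) (A : 'M[R]_d) : sym_mx A -> sym_mx (k *: A).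
Proof. by rewrite /sym_mx => hA; rewrite linearZ /= hA. Qed.

Lemma sym_mx_scalar (k : R) : sym_mx (k%:M : 'M[R]_d).
Proof. by rewrite /sym_mx tr_scalar_mx. Qed.

Lemma sym_mx_sym_of (c : 'I_d * 'I_d -> R) : sym_mx (sym_of c).
Proof.
apply/matrixP => i j; rewrite !mxE /=.
case: (leqP j i) => ji; case: (leqP i j) => ij //.
  by have -> : i = j by apply/val_inj/eqP; rewrite eqn_leq ij ji.
by have := ltn_trans ji ij; rewrite ltnn.
Qed.

Lemma normr_sym_of_le (c : 'I_d * 'I_d -> R) (e : R) :
  (forall p, p \in coords d -> `|c p| <= e) -> forall i j, `|sym_of c i j| <= e.
Proof.
move=> ce i j; rewrite mxE; case: ifP => ij; apply: ce.
  by rewrite mem_filter /= ij mem_enum in_setT.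
by rewrite mem_filter /= mem_enum in_setT andbT ltnW // ltnNge ij.
Qed.

Lemma quad_formE (A : 'M[R]_d) (v : 'cV[R]_d) :
  (v^T *m A *m v) 0 0 = \sum_k \sum_i v i 0 * A i k * v k 0.
Proof.
rewrite mxE; apply: eq_bigr => k _; rewrite mxE big_distrl /=.
by apply: eq_bigr => i _; rewrite mxE.
Qed.

Lemma psd_diag_dominant (Q : 'M[R]_d) (e : R) : sym_mx Q ->
  (forall i j, `|Q i j| <= e) -> psd ((e * d%:R)%:M + Q).
Proof.
move=> sQ Qe; split; first exact: sym_mxD (sym_mx_scalar _) sQ.
move=> v; rewrite mulmxDr mulmxDl mul_mx_scalar -scalemxAl.
rewrite mxE [X in X + _]mxE quad_formE.
set S := \sum_i v i 0 ^+ 2.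
have -> : (v^T *m v) 0 0 = S.
  by rewrite mxE; apply: eq_bigr => i _; rewrite mxE expr2.
have Q_ge : \sum_k \sum_i - (e / 2) * (v i 0 ^+ 2 + v k 0 ^+ 2) <=
    \sum_k \sum_i v i 0 * Q i k * v k 0.
  by apply: ler_sum => k _; apply: ler_sum => i _; apply: bilinear_term_ge.
have -> : e * d%:R * S = - (\sum_k \sum_i - (e / 2) * (v i 0 ^+ 2 + v k 0 ^+ 2)).
  under eq_bigr => k _ do
    rewrite -mulr_sumr big_split /= [X in _ + X]sumr_const card_ord.
  rewrite -mulr_sumr big_split /= [X in X + _]sumr_const card_ord sumrMnl.
  by rewrite -/S !mulr_natr; field.
by rewrite addrC subr_ge0.
Qed.

End symmetric_matrices.

Definition uniformly_elliptic (R : realType) (d : nat) (nrm : 'M[R]_d -> R)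
    (lam Lam : R) (F : 'M[R]_d -> R) :=
  forall M N : 'M[R]_d, sym_mx M -> psd N ->
    lam * nrm N <= F (M + N) - F M /\ F (M + N) - F M <= Lam * nrm N.

Section uniformly_elliptic.
Variables (R : realType) (d : nat) (nrm : 'M[R]_d -> R) (lam Lam : R).
Variable F : 'M[R]_d -> R.
Hypotheses (nrm_ge0 : forall A, 0 <= nrm A) (lam_ge0 : 0 <= lam).
Hypothesis F_elliptic : uniformly_elliptic nrm lam Lam F.

Lemma elliptic_monotone M N : sym_mx M -> psd N -> F M <= F (M + N).
Proof.
move=> sM pN; have [lo _] := F_elliptic sM pN.
by rewrite -subr_ge0 (le_trans _ lo) // mulr_ge0.
Qed.

Lemma elliptic_le_shift M N : sym_mx M -> psd N -> F (M + N) <= F M + Lam * nrm N.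
Proof. by move=> sM pN; have [_] := F_elliptic sM pN; rewrite lerBlDl. Qed.

Lemma elliptic_perturbation X P Q : sym_mx X -> sym_mx Q ->
  psd P -> psd (P + Q) -> psd (P - Q) ->
  F X - Lam * nrm P <= F (X - Q) <= F X + Lam * nrm P.
Proof.
move=> sX sQ pP pPQ pPNQ; have sP := pP.1.
have sXP : sym_mx (X - P) by apply: sym_mxD => //; exact: sym_mxN.
have sXQ : sym_mx (X - Q) by apply: sym_mxD => //; exact: sym_mxN.
apply/andP; split.
  rewrite lerBlDr; apply: (le_trans (y := F (X - P) + Lam * nrm P)).
    by rewrite -{1}[X](subrK P) elliptic_le_shift.
  have -> : X - Q = (X - P) + (P - Q) by rewrite addrA subrK.
  by rewrite lerD2r elliptic_monotone.
apply: (le_trans (y := F (X + P))); last exact: elliptic_le_shift.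
have -> : X + P = (X - Q) + (P + Q) by rewrite [P + Q]addrC addrA subrK.
by rewrite elliptic_monotone.
Qed.

Lemma mollify_sandwich (eps : R) : 0 < eps -> forall X, sym_mx X ->
  integral_Rdstar (@Defs.eta R d eps) * (F X - Lam * nrm ((eps * d%:R)%:M))
  <= mollify F eps X <=
  integral_Rdstar (@Defs.eta R d eps) * (F X + Lam * nrm ((eps * d%:R)%:M)).
Proof.
move=> eps_gt0 X sX; rewrite /mollify ![integral_Rdstar _ * _]mulrC.
apply: integral_Rdstar_sandwich => // c.
have [->|eta_neq0] := eqVneq (Defs.eta eps c) 0; first by rewrite !mulr0 lexx.
have c_le p : p \in coords d -> `|c p| <= eps.
  move=> pA; rewrite leNgt; apply: contra eta_neq0 => /ltW.
  by move/(eta_eq0 eps_gt0 pA)->.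
have sQ := sym_mx_sym_of c.
have pP : psd ((eps * d%:R)%:M + 0 : 'M[R]_d).
  apply: psd_diag_dominant => [|i j]; first by rewrite /sym_mx trmx0.
  by rewrite mxE normr0 ltW.
rewrite addr0 in pP.
have pPQ := psd_diag_dominant sQ (normr_sym_of_le c_le).
have pPNQ : psd ((eps * d%:R)%:M - sym_of c).
  apply: psd_diag_dominant (sym_mxN sQ) _ => i j.
  by rewrite mxE normrN normr_sym_of_le.
have /andP[lo hi] := elliptic_perturbation sX sQ pP pPQ pPNQ.
have eta_c_ge0 := eta_ge0 eps_gt0 c.
by rewrite (ler_wpM2r eta_c_ge0 lo) (ler_wpM2r eta_c_ge0 hi).
Qed.

End uniformly_elliptic.

Section recession_profile.
Variables (R : realType) (d : nat).
Local Open Scope classical_set_scope.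

Lemma convex_on_symZ (k : R) (G : 'M[R]_d -> R) : 0 <= k ->
  convex_on_sym G -> convex_on_sym (fun M => k * G M).
Proof.
move=> k_ge0 G_cvx A B t sA sB t01.
rewrite mulrCA [(1 - t) * _]mulrCA -mulrDr.
exact: ler_wpM2l (G_cvx A B t sA sB t01).
Qed.

Lemma recession_limit_sandwich (G H : 'M[R]_d -> R) (k C L : R) M :
  (forall X, sym_mx X -> k * (H X - C) <= G X <= k * (H X + C)) ->
  sym_mx M -> recession_limit H M L -> recession_limit G M (k * L).
Proof.
move=> GH sM HL.
have near_sandwich : \forall mu \near (0 : R)^'+,
    k * (mu * H (mu^-1 *: M)) - k * C * mu <= mu * G (mu^-1 *: M) <=
    k * (mu * H (mu^-1 *: M)) + k * C * mu.
  near=> mu; have mu_gt0 : 0 < mu by near: mu; exact: nbhs_right_gt.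
  set X := mu^-1 *: M; have /andP[lo hi] := GH X (sym_mxZ mu^-1 sM).
  have -> : k * (mu * H X) - k * C * mu = mu * (k * (H X - C)) by ring.
  have -> : k * (mu * H X) + k * C * mu = mu * (k * (H X + C)) by ring.
  by rewrite (ler_wpM2l (ltW mu_gt0) lo) (ler_wpM2l (ltW mu_gt0) hi).
have HkL : k * (mu * H (mu^-1 *: M)) @[mu --> (0 : R)^'+] --> k * L.
  by apply: cvgM => //; exact: cvg_cst.
have mu0 : (fun mu : R => mu) @ (0 : R)^'+ --> (0 : R).
  exact: cvg_at_right_filter cvg_id.
have Cmu0 : k * C * mu @[mu --> (0 : R)^'+] --> k * C * 0.
  by apply: cvgM mu0; exact: cvg_cst.
apply: (squeeze_cvgr near_sandwich).
- by rewrite -[k * L]subr0 -[X in _ - X](mulr0 (k * C)); exact: cvgB.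
- by rewrite -[k * L]addr0 -[X in _ + X](mulr0 (k * C)); exact: cvgD.
Unshelve. all: by end_near.
Qed.

End recession_profile.

Theorem proposition3p2 (R : realType) (d : nat) (nrm : 'M[R]_d -> R)
  (lam Lam : R) (F : 'M[R]_d -> R) :
  is_matrix_norm nrm ->
  0 < lam -> lam <= Lam ->
  (forall M N : 'M[R]_d, sym_mx M -> psd N ->
     lam * nrm N <= F (M + N) - F M /\ F (M + N) - F M <= Lam * nrm N) ->
  F 0 = 0 ->
  recession_profile_convex F ->
  forall eps : R, 0 < eps -> recession_profile_convex (mollify F eps).
Proof.
move=> [nrm_ge0 _ _ _] lam_gt0 _ F_elliptic _ [Fs [Fs_lim Fs_cvx]] eps eps_gt0.
exists (fun M => integral_Rdstar (@Defs.eta R d eps) * Fs M); split.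
  move=> M sM; apply: recession_limit_sandwich _ sM (Fs_lim M sM).
  exact: (mollify_sandwich nrm_ge0 (ltW lam_gt0) F_elliptic eps_gt0).
exact: convex_on_symZ (integral_Rdstar_eta_ge0 d eps_gt0) Fs_cvx.
Qed.
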